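(* With $\alpha(m)=\frac12(m^2-m)$ and $\mathcal{A}:=\sum_{m\ge2}\frac1m\sum_{k=\alpha(m)}^{\beta(m)}\frac1k$, where $\beta(m)=\frac12(m^2+m)-1$, one has $$\mathcal{A}=\sum_{m\ge2}\frac{H_{\alpha(m+1)-1}}{m^2+m}=\frac{\gamma}{2}+\frac12\sum_{j\ge3}\frac{\psi(\alpha(j))}{\alpha(j)},$$ and all these series converge.
   Context: $H_n=\sum_{j=1}^n\frac1j$ is the $n$-th harmonic number ($H_0=0$), $\gamma$ is Euler's constant, and $\psi=\Gamma'/\Gamma$ is the digamma function. *)

From Stdlib Require Import Reals.
From Coquelicot Require Import Coquelicot.
Open Scope R_scope.

Fixpoint harmonic (n : nat) : R :=
  match n with
  | O => 0
  | S k => harmonic k + / INR (S k)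
  end.

Definition alpha (m : nat) : nat := ((m * m - m) / 2)%nat.
Definition beta (m : nat) : nat := ((m * m + m) / 2 - 1)%nat.

Definition euler_gamma : R := real (Lim_seq (fun n => harmonic n - ln (INR n))).

Definition Gamma (x : R) : R :=
  RInt_gen (fun t => Rpower t (x - 1) * exp (- t)) (at_right 0) (Rbar_locally p_infty).

Definition digamma (x : R) : R := Derive Gamma x / Gamma x.

(* The three series, reindexed to start at 0. *)
Definition termA (n : nat) : R :=
  let m := (n + 2)%nat in
  / INR m * sum_n_m (fun k => / INR k) (alpha m) (beta m).

Definition termB (n : nat) : R :=
  let m := (n + 2)%nat in
  harmonic (alpha (m + 1) - 1) / (INR m ^ 2 + INR m).

Definition termC (n : nat) : R :=
  let j := (n + 3)%nat in
  digamma (INR (alpha j)) / INR (alpha j).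

(* Let [log_mean k = (1/k!) * int_0^oo t^k ln t e^(-t) dt]. Integrating by parts gives
   [log_mean (k+1) = log_mean k + 1/(k+1)], and integrating the tangent lines of [ln] at [k]
   and [k+1] against [t^k e^(-t)] gives [ln k <= log_mean k <= ln (k+1)]; hence
   [log_mean k = H_k - gamma]. Differentiating [Gamma] under the integral sign at an integer
   [n >= 3] gives [psi n = log_mean (n-1) = H_(n-1) - gamma].
   Since [alpha (m+1) = alpha m + m], the inner sum of [A] is [H_(alpha(m+1)-1) - H_(alpha m - 1)],
   so Abel summation turns [A] into the second series plus a boundary term
   [H_(alpha m - 1) / m = O(ln m / m)]. As [alpha (m+1) = m (m+1) / 2], the third series is
   twice the second minus [gamma * sum 2/(m(m+1)) = gamma]. *)

From Stdlib Require Import Reals Lra Lia Factorial.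
From Coquelicot Require Import Coquelicot.
Open Scope R_scope.

(** * Elementary inequalities *)

Lemma ex_derive_continuous_R (f : R -> R) (x : R) : ex_derive f x -> continuous f x.
Proof. exact (ex_derive_continuous (K := R_AbsRing) (V := R_NormedModule) f x). Qed.

Lemma ln_le_sub_1 (x : R) : 0 < x -> ln x <= x - 1.
Proof. intros Hx. assert (H := exp_ineq1_le (ln x)). rewrite exp_ln in H; lra. Qed.

Lemma ln_le_self (x : R) : 0 < x -> ln x <= x.
Proof. intros Hx. assert (H := ln_le_sub_1 x Hx). lra. Qed.

Lemma ln_nonneg (x : R) : 1 <= x -> 0 <= ln x.
Proof. intros Hx. rewrite <- ln_1. apply ln_le; lra. Qed.

Lemma ln_le_tangent (a t : R) : 0 < a -> 0 < t -> ln t <= ln a + t / a - 1.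
Proof.
  intros Ha Ht. assert (H := ln_le_sub_1 (t / a) ltac:(apply Rdiv_lt_0_compat; lra)).
  rewrite ln_div in H by lra. lra.
Qed.

Lemma ln_ge_tangent (a t : R) : 0 < a -> 0 < t -> ln a + 1 - a / t <= ln t.
Proof.
  intros Ha Ht. assert (H := ln_le_sub_1 (a / t) ltac:(apply Rdiv_lt_0_compat; lra)).
  rewrite ln_div in H by lra. lra.
Qed.

Lemma ln_succ_sub_le_inv (x : R) : 0 < x -> ln (x + 1) - ln x <= / x.
Proof.
  intros Hx. assert (H := ln_le_tangent x (x + 1) Hx ltac:(lra)).
  replace ((x + 1) / x) with (1 + / x) in H by (field; lra). lra.
Qed.

Lemma exp_le_exp (x y : R) : x <= y -> exp x <= exp y.
Proof. intros [H|H]; [left; apply exp_increasing; exact H | subst; lra]. Qed.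

Lemma exp_neg_le_1 (t : R) : 0 <= t -> exp (- t) <= 1.
Proof. intros Ht. rewrite <- exp_0. apply exp_le_exp. lra. Qed.

Lemma mul_abs_ln_le_1 (t : R) : 0 < t <= 1 -> t * Rabs (ln t) <= 1.
Proof.
  intros Ht. assert (H1 := ln_le_sub_1 (/ t) ltac:(apply Rinv_0_lt_compat; lra)).
  rewrite ln_Rinv in H1 by lra.
  assert (H2 : ln t <= 0) by (assert (H := ln_le_sub_1 t ltac:(lra)); lra).
  rewrite Rabs_left1 by lra.
  assert (t * / t = 1) by (field; lra). nra.
Qed.

Lemma mul_abs_ln_le (t : R) : 0 < t -> t * Rabs (ln t) <= 1 + t ^ 2.
Proof.
  intros Ht. destruct (Rle_dec t 1) as [H|H].
  - assert (B := mul_abs_ln_le_1 t ltac:(lra)). nra.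
  - rewrite Rabs_pos_eq by (apply ln_nonneg; lra).
    assert (B := ln_le_self t Ht). nra.
Qed.

(* Apply [mul_abs_ln_le_1] to [sqrt t]. *)
Lemma mul_ln_sqr_le_4 (t : R) : 0 < t <= 1 -> t * ln t ^ 2 <= 4.
Proof.
  intros Ht. set (s := sqrt t).
  assert (Hs : 0 < s) by (apply sqrt_lt_R0; lra).
  assert (Ess : s * s = t) by (apply sqrt_sqrt; lra).
  assert (Hl : ln t = 2 * ln s) by (rewrite <- Ess, ln_mult; lra).
  assert (B := mul_abs_ln_le_1 s ltac:(nra)).
  assert (E : s * s * (2 * ln s) ^ 2 = 4 * ((s * Rabs (ln s)) * (s * Rabs (ln s)))).
  { replace ((2 * ln s) ^ 2) with (4 * Rabs (ln s) ^ 2) by (rewrite pow2_abs; ring). ring. }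
  rewrite Hl, <- Ess, E.
  assert (0 <= s * Rabs (ln s)) by (apply Rmult_le_pos; [lra|apply Rabs_pos]).
  nra.
Qed.

Lemma ln_sqr_mul_le (t : R) : 0 < t -> (t + t ^ 3) * ln t ^ 2 <= 8 + 2 * t ^ 5.
Proof.
  intros Ht. assert (L2 := pow2_ge_0 (ln t)).
  destruct (Rle_dec t 1) as [H|H].
  - assert (B := mul_ln_sqr_le_4 t ltac:(lra)).
    assert (0 <= t * ln t ^ 2) by nra. assert (t * t <= 1) by nra.
    assert (t ^ 3 * ln t ^ 2 <= 4) by (replace (t ^ 3 * ln t ^ 2) with (t * t * (t * ln t ^ 2)) by ring;
      apply Rle_trans with (1 * 4); [apply Rmult_le_compat; nra|lra]).
    assert (0 <= t ^ 5) by (apply pow_le; lra). nra.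
  - assert (B := ln_le_self t Ht). assert (B2 := ln_nonneg t ltac:(lra)).
    assert (ln t ^ 2 <= t ^ 2) by nra.
    assert (0 <= t + t ^ 3) by (assert (0 <= t ^ 3) by (apply pow_le; lra); lra).
    apply Rle_trans with ((t + t ^ 3) * t ^ 2); [apply Rmult_le_compat_l; lra|].
    assert (0 <= t ^ 3) by (apply pow_le; lra). assert (1 <= t * t) by nra.
    assert (t ^ 3 * 1 <= t ^ 3 * (t * t)) by (apply Rmult_le_compat_l; lra).
    replace ((t + t ^ 3) * t ^ 2) with (t ^ 3 + t ^ 3 * (t * t)) by ring.
    replace (t ^ 5) with (t ^ 3 * (t * t)) by ring. lra.
Qed.

Lemma exp_abs_ln_le (t : R) : 0 < t -> exp (Rabs (ln t)) <= / t + t.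
Proof.
  intros Ht. assert (Hi : 0 < / t) by (apply Rinv_0_lt_compat; lra).
  destruct (Rle_dec t 1) as [H|H].
  - rewrite Rabs_left1 by (assert (H3 := ln_le_sub_1 t Ht); lra).
    rewrite <- ln_Rinv, exp_ln by lra. lra.
  - rewrite Rabs_pos_eq by (apply ln_nonneg; lra). rewrite exp_ln by lra. lra.
Qed.

Lemma exp_sub_1_abs_le (u : R) : Rabs (exp u - 1) <= Rabs u * exp (Rabs u).
Proof.
  destruct (MVT_gen exp 0 u exp) as [c [Hc E]].
  - intros x _. auto_derive; auto. ring.
  - intros x _. apply continuity_pt_filterlim, (ex_derive_continuous_R (fun x => _)). auto_derive. auto.
  - rewrite exp_0, Rminus_0_r in E. rewrite E, Rabs_mult, Rabs_pos_eq by (left; apply exp_pos).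
    rewrite Rmult_comm. apply Rmult_le_compat_l; [apply Rabs_pos|]. apply exp_le_exp.
    unfold Rmin, Rmax in Hc. destruct Rle_dec; [rewrite Rabs_pos_eq|rewrite Rabs_left]; lra.
Qed.

Lemma exp_sub_1_sub_abs_le (u : R) : Rabs (exp u - 1 - u) <= u ^ 2 * exp (Rabs u).
Proof.
  destruct (MVT_gen (fun x => exp x - 1 - x) 0 u (fun x => exp x - 1)) as [c [Hc E]].
  - intros x _. auto_derive; auto. ring.
  - intros x _. apply continuity_pt_filterlim, (ex_derive_continuous_R (fun x => _)). auto_derive. auto.
  - rewrite exp_0 in E. replace (exp u - 1 - u) with ((exp c - 1) * u) by lra.
    assert (Hcu : Rabs c <= Rabs u).
    { unfold Rmin, Rmax in Hc. destruct Rle_dec; [rewrite !Rabs_pos_eq|rewrite !Rabs_left1]; lra. }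
    assert (H1 := exp_sub_1_abs_le c). assert (H2 := exp_le_exp _ _ Hcu).
    assert (H3 := Rabs_pos c). assert (H4 := exp_pos (Rabs c)). assert (H5 := Rabs_pos u).
    replace (u ^ 2) with (Rabs u * Rabs u) by (rewrite <- Rabs_mult, Rabs_pos_eq; [ring|nra]).
    rewrite Rabs_mult.
    apply Rle_trans with (Rabs c * exp (Rabs c) * Rabs u); [apply Rmult_le_compat_r; lra|].
    assert (Rabs c * exp (Rabs c) <= Rabs u * exp (Rabs u)) by (apply Rmult_le_compat; lra).
    nra.
Qed.

Lemma pow_le_self (j : nat) (t : R) : (1 <= j)%nat -> 0 < t <= 1 -> t ^ j <= t.
Proof.
  intros Hj Ht. destruct j as [|j]; [lia|]. simpl.
  assert (t ^ j <= 1) by (rewrite <- (pow1 j); apply pow_incr; lra).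
  assert (0 <= t ^ j) by (apply pow_le; lra). nra.
Qed.

Lemma exp_INR_mul (N : nat) (x : R) : exp (INR N * x) = exp x ^ N.
Proof.
  induction N as [|N IH]; [simpl; rewrite Rmult_0_l; apply exp_0|].
  rewrite S_INR, Rmult_plus_distr_r, Rmult_1_l, exp_plus, IH. simpl. ring.
Qed.

(* From [x <= exp x] at [x = t / N], raised to the power [N]. *)
Lemma pow_mul_exp_neg_le (N : nat) (t : R) : (0 < N)%nat -> 0 < t -> t ^ N * exp (- t) <= INR N ^ N.
Proof.
  intros HN Ht. assert (HN' : 0 < INR N) by (apply lt_0_INR; lia).
  assert (H1 : t / INR N <= exp (t / INR N)) by (assert (H := exp_ineq1_le (t / INR N)); lra).
  assert (H2 : (t / INR N) ^ N <= exp (t / INR N) ^ N).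
  { apply pow_incr. split; [|exact H1]. apply Rlt_le, Rdiv_lt_0_compat; lra. }
  rewrite <- exp_INR_mul in H2. replace (INR N * (t / INR N)) with t in H2 by (field; lra).
  unfold Rdiv in H2. rewrite Rpow_mult_distr, pow_inv in H2.
  rewrite exp_Ropp.
  assert (0 < INR N ^ N) by (apply pow_lt; lra). assert (0 < exp t) by apply exp_pos.
  apply Rmult_le_reg_r with (/ INR N ^ N * exp t); [apply Rmult_lt_0_compat; [apply Rinv_0_lt_compat|]; lra|].
  replace (t ^ N * / exp t * (/ INR N ^ N * exp t)) with (t ^ N * / INR N ^ N) by (field; lra).
  replace (INR N ^ N * (/ INR N ^ N * exp t)) with (exp t) by (field; lra).
  exact H2.
Qed.

Lemma pow_mul_exp_neg_le_inv (m : nat) (t : R) : 0 < t -> t ^ m * exp (- t) <= INR (S m) ^ (S m) / t.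
Proof.
  intros Ht. assert (H := pow_mul_exp_neg_le (S m) t ltac:(lia) Ht).
  apply Rmult_le_reg_r with t; auto.
  replace (INR (S m) ^ S m / t * t) with (INR (S m) ^ S m) by (field; lra).
  simpl in H |- *. lra.
Qed.

(** * Improper integrals over (0, +oo) *)

Notation at_0 := (at_right 0).
Notation at_oo := (Rbar_locally p_infty).

Lemma at_0_intro (P : R -> Prop) (d : R) : 0 < d -> (forall t, 0 < t < d -> P t) -> at_0 P.
Proof.
  intros Hd H. exists (mkposreal d Hd). intros y Hy Hy0. apply H.
  change (Rabs (y - 0) < d) in Hy. rewrite Rminus_0_r, Rabs_pos_eq in Hy; lra.
Qed.

Lemma at_0_elim (P : R -> Prop) : at_0 P -> exists d, 0 < d /\ forall t, 0 < t < d -> P t.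
Proof.
  intros [e He]. exists e. split; [apply cond_pos|]. intros t Ht. apply He; [|lra].
  change (Rabs (t - 0) < e). rewrite Rminus_0_r, Rabs_pos_eq; lra.
Qed.

Lemma filter_prod_intro (P : R * R -> Prop) (d M : R) :
  0 < d -> (forall a b, 0 < a < d -> M < b -> P (a, b)) -> filter_prod at_0 at_oo P.
Proof.
  intros Hd H. apply Filter_prod with (fun a => 0 < a < d) (fun b => M < b); auto.
  - apply at_0_intro with d; auto.
  - exists M; auto.
Qed.

Lemma filter_prod_elim (P : R * R -> Prop) : filter_prod at_0 at_oo P ->
  exists d M, 0 < d /\ forall a b, 0 < a < d -> M < b -> P (a, b).
Proof.
  intros [Q R HQ [M HM] H]. destruct (at_0_elim _ HQ) as [d [Hd HQd]].
  exists d, M. split; auto.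
Qed.

Lemma filter_prod_pos : filter_prod at_0 at_oo (fun ab => 0 < fst ab /\ 0 < snd ab).
Proof. apply filter_prod_intro with 1 0; [lra|]. intros; simpl; lra. Qed.

Section PositiveHalfLine.

Variable f : R -> R.
Hypothesis f_cont : forall t, 0 < t -> continuous f t.

Lemma ex_RInt_pos (u v : R) : 0 < u -> 0 < v -> ex_RInt f u v.
Proof.
  intros Hu Hv. apply (@ex_RInt_continuous R_CompleteNormedModule). intros z [Hz _]. apply f_cont.
  assert (H := Rmin_pos u v Hu Hv). lra.
Qed.

Lemma is_RInt_gen_filterlim (l : R) :
  is_RInt_gen f at_0 at_oo l <->
  filterlim (fun ab => RInt f (fst ab) (snd ab)) (filter_prod at_0 at_oo) (locally l).
Proof.
  split.
  - intros H P HP. specialize (H P HP). unfold filtermapi in H. unfold filtermap.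
    eapply filter_imp; [|exact H]. intros [a b] [y [Hy Py]]. simpl in *.
    rewrite (is_RInt_unique (V := R_CompleteNormedModule) _ _ _ _ Hy). exact Py.
  - intros H P HP. specialize (H P HP). unfold filtermap in H. unfold filtermapi.
    generalize (filter_and _ _ H filter_prod_pos). apply filter_imp.
    intros [a b] [Pab [Ha Hb]]. exists (RInt f a b). split; auto.
    apply (RInt_correct (V := R_CompleteNormedModule)). apply ex_RInt_pos; auto.
Qed.

End PositiveHalfLine.

Lemma is_RInt_gen_le (f g : R -> R) (lf lg : R) :
  (forall t, 0 < t -> continuous f t) -> (forall t, 0 < t -> continuous g t) ->
  (forall t, 0 < t -> f t <= g t) ->
  is_RInt_gen f at_0 at_oo lf -> is_RInt_gen g at_0 at_oo lg -> lf <= lg.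
Proof.
  intros Cf Cg Hfg Hf Hg.
  apply is_RInt_gen_filterlim in Hf; auto. apply is_RInt_gen_filterlim in Hg; auto.
  apply (filterlim_le (F := filter_prod at_0 at_oo) (fun ab => RInt f (fst ab) (snd ab))
    (fun ab => RInt g (fst ab) (snd ab)) lf lg); [|exact Hf|exact Hg].
  apply filter_prod_intro with 1 1; [lra|]. intros a b Ha Hb; simpl.
  apply RInt_le; try lra; try (apply ex_RInt_pos; auto; lra).
  intros x Hx. apply Hfg. lra.
Qed.

Section Domination.

Variables f g : R -> R.
Hypothesis f_cont : forall t, 0 < t -> continuous f t.
Hypothesis g_cont : forall t, 0 < t -> continuous g t.
Hypothesis f_dom : forall t, 0 < t -> Rabs (f t) <= g t.

Lemma RInt_abs_le_pos (a b : R) : 0 < a -> 0 < b -> Rabs (RInt f a b) <= Rabs (RInt g a b).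
Proof.
  assert (K : forall u v, 0 < u -> u <= v -> Rabs (RInt f u v) <= Rabs (RInt g u v)).
  { intros u v Hu Huv.
    apply Rle_trans with (RInt g u v); [|apply Rle_abs].
    eapply Rle_trans; [apply abs_RInt_le; auto; apply ex_RInt_pos; auto; lra|].
    apply RInt_le; auto; [| |intros t Ht; apply f_dom; lra]; apply ex_RInt_pos; auto; try lra.
    intros t Ht. apply (continuous_comp f Rabs); auto. apply continuous_Rabs. }
  intros Ha Hb. destruct (Rle_dec a b) as [H|H]; [apply K; auto|].
  rewrite <- (opp_RInt_swap f), <- (opp_RInt_swap g) by (apply ex_RInt_pos; auto).
  unfold opp; simpl. rewrite !Rabs_Ropp. apply K; lra.
Qed.

Lemma RInt_sub_abs_le_pos (a b a' b' : R) : 0 < a -> 0 < b -> 0 < a' -> 0 < b' ->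
  Rabs (RInt f a' b' - RInt f a b) <=
  Rabs (RInt g a' b - RInt g a b) + Rabs (RInt g a' b' - RInt g a' b).
Proof.
  intros Ha Hb Ha' Hb'.
  assert (Chasles : forall h u v w, (forall t, 0 < t -> continuous h t) -> 0 < u -> 0 < v -> 0 < w ->
            RInt h u w - RInt h u v = RInt h v w).
  { intros h u v w Ch Hu Hv Hw.
    rewrite <- (RInt_Chasles (V := R_CompleteNormedModule) h u v w) by (apply ex_RInt_pos; auto).
    unfold plus; simpl. ring. }
  pose proof (Chasles f a' a b f_cont Ha' Ha Hb). pose proof (Chasles f a' b b' f_cont Ha' Hb Hb').
  pose proof (Chasles g a' a b g_cont Ha' Ha Hb). pose proof (Chasles g a' b b' g_cont Ha' Hb Hb').
  replace (RInt f a' b' - RInt f a b) with (RInt f a' a + RInt f b b') by lra.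
  replace (RInt g a' b - RInt g a b) with (RInt g a' a) by lra.
  replace (RInt g a' b' - RInt g a' b) with (RInt g b b') by lra.
  eapply Rle_trans; [apply Rabs_triang|].
  apply Rplus_le_compat; apply RInt_abs_le_pos; auto.
Qed.

Lemma ex_RInt_gen_dominated (lg : R) : is_RInt_gen g at_0 at_oo lg -> ex_RInt_gen f at_0 at_oo.
Proof.
  intros Hg. apply (is_RInt_gen_filterlim g g_cont) in Hg.
  assert (Cg := proj2 (filterlim_locally_cauchy (F := filter_prod at_0 at_oo) _) (ex_intro _ lg Hg)).
  destruct (proj1 (filterlim_locally_cauchy (F := filter_prod at_0 at_oo)
    (fun ab => RInt f (fst ab) (snd ab)))) as [l Hl].
  2:{ exists l. apply is_RInt_gen_filterlim; auto. }
  intros eps. destruct (Cg (pos_div_2 eps)) as [P [HP HPc]].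
  destruct (filter_prod_elim _ HP) as [d [M [Hd HdM]]].
  exists (fun ab => 0 < fst ab < d /\ Rmax M 0 < snd ab). split.
  { apply filter_prod_intro with d (Rmax M 0); auto. }
  intros [a b] [a' b'] [Ha Hb] [Ha' Hb']; simpl in *.
  assert (HM := Rmax_l M 0). assert (H0 := Rmax_r M 0).
  assert (B1 : Rabs (RInt g a' b - RInt g a b) < eps / 2)
    by exact (HPc _ _ (HdM a b ltac:(lra) ltac:(lra)) (HdM a' b ltac:(lra) ltac:(lra))).
  assert (B2 : Rabs (RInt g a' b' - RInt g a' b) < eps / 2)
    by exact (HPc _ _ (HdM a' b ltac:(lra) ltac:(lra)) (HdM a' b' ltac:(lra) ltac:(lra))).
  assert (D := RInt_sub_abs_le_pos a b a' b' ltac:(lra) ltac:(lra) ltac:(lra) ltac:(lra)).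
  change (Rabs (RInt f a' b' - RInt f a b) < eps). lra.
Qed.

Lemma abs_is_RInt_gen_le (lf lg : R) :
  is_RInt_gen f at_0 at_oo lf -> is_RInt_gen g at_0 at_oo lg -> Rabs lf <= lg.
Proof.
  apply (RInt_gen_norm f g lf lg).
  - apply filter_prod_intro with 1 1; [lra|]. intros; simpl; lra.
  - apply filter_prod_intro with 1 1; [lra|]. intros a b Ha Hb x Hx. apply f_dom. simpl in Hx. lra.
Qed.

End Domination.

Lemma is_RInt_gen_lincomb (f g h : R -> R) (a b lf lg l : R) :
  is_RInt_gen f at_0 at_oo lf -> is_RInt_gen g at_0 at_oo lg ->
  (forall t, 0 < t -> h t = a * f t + b * g t) -> l = a * lf + b * lg ->
  is_RInt_gen h at_0 at_oo l.
Proof.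
  intros Hf Hg Hh ->.
  assert (H := is_RInt_gen_plus _ _ _ _ (is_RInt_gen_scal _ a _ Hf) (is_RInt_gen_scal _ b _ Hg)).
  eapply is_RInt_gen_ext; [|exact H].
  apply filter_prod_intro with 1 1; [lra|]. intros u v Hu Hv x Hx. simpl in Hx.
  rewrite Hh; [reflexivity|]. assert (H0 := Rmin_pos u v ltac:(lra) ltac:(lra)). lra.
Qed.

Lemma filterlim_at_0_of_le (F : R -> R) (l C d : R) :
  0 < d -> (forall t, 0 < t < d -> Rabs (F t - l) <= C * t) -> filterlim F at_0 (locally l).
Proof.
  intros Hd H. apply filterlim_locally. intros eps.
  assert (HC := Rabs_pos C). assert (Heps := cond_pos eps).
  set (e := Rmin d (eps / (Rabs C + 1))).
  assert (He : 0 < e) by (apply Rmin_pos; [|apply Rdiv_lt_0_compat]; lra).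
  assert (Hed : e <= d) by apply Rmin_l. assert (Hee : e <= eps / (Rabs C + 1)) by apply Rmin_r.
  apply at_0_intro with e; auto. intros t Ht. change (Rabs (F t - l) < eps).
  assert (C * t <= Rabs C * t) by (apply Rmult_le_compat_r; [lra|apply Rle_abs]).
  assert (Rabs C * t <= Rabs C * e) by (apply Rmult_le_compat_l; lra).
  assert (Rabs C * e <= Rabs C * (eps / (Rabs C + 1))) by (apply Rmult_le_compat_l; lra).
  assert (Rabs C * (eps / (Rabs C + 1)) = eps - eps / (Rabs C + 1)) by (field; lra).
  assert (0 < eps / (Rabs C + 1)) by (apply Rdiv_lt_0_compat; lra).
  assert (Hbound := H t ltac:(lra)). lra.
Qed.

Lemma filterlim_at_oo_of_le (F : R -> R) (l C M : R) :
  (forall t, M < t -> Rabs (F t - l) <= C / t) -> filterlim F at_oo (locally l).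
Proof.
  intros H. apply filterlim_locally. intros eps.
  assert (HC := Rabs_pos C). assert (Heps := cond_pos eps).
  set (N := Rmax (Rmax M 1) ((Rabs C + 1) / eps)).
  assert (N1 := Rmax_l (Rmax M 1) ((Rabs C + 1) / eps)).
  assert (N2 := Rmax_r (Rmax M 1) ((Rabs C + 1) / eps)).
  assert (M1 := Rmax_l M 1). assert (M2 := Rmax_r M 1).
  exists N. intros t Ht. change (Rabs (F t - l) < eps).
  eapply Rle_lt_trans; [apply H; unfold N in *; lra|].
  apply Rle_lt_trans with (Rabs C / t).
  { apply Rmult_le_compat_r; [left; apply Rinv_0_lt_compat; unfold N in *; lra|apply Rle_abs]. }
  apply Rmult_lt_reg_r with t; [unfold N in *; lra|].
  replace (Rabs C / t * t) with (Rabs C) by (field; unfold N in *; lra).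
  assert ((Rabs C + 1) / eps * eps = Rabs C + 1) by (field; lra).
  assert ((Rabs C + 1) / eps * eps < t * eps) by (apply Rmult_lt_compat_r; unfold N in *; lra).
  lra.
Qed.

Lemma is_RInt_gen_antiderivative (F f : R -> R) (la lb : R) :
  (forall t, 0 < t -> is_derive F t (f t)) -> (forall t, 0 < t -> continuous f t) ->
  filterlim F at_0 (locally la) -> filterlim F at_oo (locally lb) ->
  is_RInt_gen f at_0 at_oo (lb - la).
Proof.
  intros HD Hc HA HB. apply is_RInt_gen_filterlim; auto.
  apply filterlim_locally. intros eps.
  destruct (at_0_elim _ (proj1 (filterlim_locally F la) HA (pos_div_2 eps))) as [d [Hd HA']].
  destruct (proj1 (filterlim_locally F lb) HB (pos_div_2 eps)) as [M HB'].
  apply filter_prod_intro with d (Rmax M 1); auto. intros a b Ha Hb.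
  assert (HM1 := Rmax_l M 1). assert (HM2 := Rmax_r M 1).
  assert (Hab := Rmin_pos a b ltac:(lra) ltac:(lra)).
  assert (E : RInt f a b = F b - F a).
  { apply (is_RInt_unique (V := R_CompleteNormedModule)).
    apply (is_RInt_derive (V := R_CompleteNormedModule)); intros x Hx; [apply HD|apply Hc]; lra. }
  change (Rabs (RInt f a b - (lb - la)) < eps). rewrite E.
  assert (X1 : Rabs (F a - la) < eps / 2) by exact (HA' a Ha).
  assert (X2 : Rabs (F b - lb) < eps / 2) by exact (HB' b ltac:(lra)).
  replace (F b - F a - (lb - la)) with ((F b - lb) - (F a - la)) by ring.
  eapply Rle_lt_trans; [apply Rabs_triang|]. rewrite Rabs_Ropp. lra.
Qed.

(** * The moments of [t^k e^(-t)] and [t^k ln t e^(-t)] *)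

Definition kernel (j : nat) (t : R) : R := t ^ j * exp (- t).

Definition log_kernel (j : nat) (t : R) : R := t ^ j * ln t * exp (- t).

Lemma continuous_kernel (j : nat) (t : R) : continuous (kernel j) t.
Proof. apply ex_derive_continuous_R. unfold kernel. auto_derive. auto. Qed.

Lemma continuous_log_kernel (j : nat) (t : R) : 0 < t -> continuous (log_kernel j) t.
Proof. intros Ht. apply ex_derive_continuous_R. unfold log_kernel. auto_derive. auto. Qed.

Lemma kernel_nonneg (j : nat) (t : R) : 0 < t -> 0 <= kernel j t.
Proof. intros Ht. apply Rmult_le_pos; [apply pow_le; lra|left; apply exp_pos]. Qed.

Lemma kernel_succ (j : nat) (t : R) : kernel (S j) t = t * kernel j t.
Proof. unfold kernel. simpl. ring. Qed.

Lemma log_kernel_eq (j : nat) (t : R) : log_kernel j t = kernel j t * ln t.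
Proof. unfold log_kernel, kernel. ring. Qed.

Lemma filterlim_kernel_at_0 (j : nat) : filterlim (kernel (S j)) at_0 (locally 0).
Proof.
  apply filterlim_at_0_of_le with 1 1; [lra|]. intros t Ht. rewrite Rminus_0_r.
  assert (H1 := pow_le_self (S j) t ltac:(lia) ltac:(lra)). assert (H2 := exp_neg_le_1 t ltac:(lra)).
  assert (H3 := kernel_nonneg (S j) t ltac:(lra)). assert (H4 := exp_pos (- t)).
  assert (0 <= t ^ S j) by (apply pow_le; lra).
  rewrite Rabs_pos_eq by exact H3. unfold kernel. nra.
Qed.

Lemma filterlim_kernel_at_oo (j : nat) : filterlim (kernel j) at_oo (locally 0).
Proof.
  apply filterlim_at_oo_of_le with (INR (S j) ^ S j) 0. intros t Ht.
  rewrite Rminus_0_r, Rabs_pos_eq by (apply kernel_nonneg; lra).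
  apply pow_mul_exp_neg_le_inv; lra.
Qed.

Lemma is_RInt_gen_kernel (j : nat) : is_RInt_gen (kernel j) at_0 at_oo (INR (fact j)).
Proof.
  induction j as [|j IH].
  - replace (INR (fact 0)) with (0 - (-1)) by (simpl; ring).
    apply is_RInt_gen_antiderivative with (fun t => - kernel 0 t).
    + intros t Ht. unfold kernel. auto_derive; auto. simpl. ring.
    + intros; apply continuous_kernel.
    + apply filterlim_at_0_of_le with 1 1; [lra|]. intros t Ht. unfold kernel. simpl.
      assert (H1 := exp_ineq1_le (- t)). assert (H2 := exp_neg_le_1 t ltac:(lra)).
      rewrite Rabs_pos_eq; lra.
    + apply filterlim_at_oo_of_le with 1 0. intros t Ht.
      rewrite Rminus_0_r, Rabs_Ropp, Rabs_pos_eq by (apply kernel_nonneg; lra).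
      assert (H := pow_mul_exp_neg_le_inv 0 t ltac:(lra)). unfold kernel. simpl in *. lra.
  - apply is_RInt_gen_lincomb with (kernel j) (fun t => INR (S j) * kernel j t - kernel (S j) t)
      (INR (S j)) (-1) (INR (fact j)) (0 - 0); auto.
    + apply is_RInt_gen_antiderivative with (kernel (S j)).
      * intros t Ht. unfold kernel. auto_derive; auto.
        change (match j with 0%nat => 1 | S _ => INR j + 1 end) with (INR (S j)). simpl. ring.
      * intros t Ht. apply ex_derive_continuous_R. unfold kernel. auto_derive. auto.
      * apply filterlim_kernel_at_0.
      * apply filterlim_kernel_at_oo.
    + intros; ring.
    + rewrite fact_simpl, mult_INR. ring.
Qed.

Lemma abs_log_kernel_le (k : nat) (t : R) : 0 < t ->
  Rabs (log_kernel (S k) t) <= kernel k t + kernel (S (S k)) t.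
Proof.
  intros Ht. rewrite log_kernel_eq, !kernel_succ, Rabs_mult.
  rewrite Rabs_pos_eq by (apply Rmult_le_pos; [lra|apply kernel_nonneg; lra]).
  assert (B := mul_abs_ln_le t Ht). assert (P := kernel_nonneg k t Ht).
  apply Rle_trans with (kernel k t * (1 + t ^ 2)); [|right; ring].
  replace (t * kernel k t * Rabs (ln t)) with (kernel k t * (t * Rabs (ln t))) by ring.
  apply Rmult_le_compat_l; lra.
Qed.

Definition log_moment (k : nat) : R := RInt_gen (log_kernel k) at_0 at_oo.

Lemma is_RInt_gen_log_kernel (k : nat) : is_RInt_gen (log_kernel (S k)) at_0 at_oo (log_moment (S k)).
Proof.
  apply (RInt_gen_correct (V := R_CompleteNormedModule)).
  apply ex_RInt_gen_dominated with (fun t => kernel k t + kernel (S (S k)) t)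
    (INR (fact k) + INR (fact (S (S k)))).
  - intros; apply continuous_log_kernel; auto.
  - intros t Ht. apply ex_derive_continuous_R. unfold kernel. auto_derive. auto.
  - intros; apply abs_log_kernel_le; auto.
  - apply is_RInt_gen_lincomb with (kernel k) (kernel (S (S k))) 1 1 (INR (fact k)) (INR (fact (S (S k))));
      try apply is_RInt_gen_kernel; intros; ring.
Qed.

Lemma filterlim_log_kernel_at_0 (k : nat) : filterlim (log_kernel (S (S k))) at_0 (locally 0).
Proof.
  apply filterlim_at_0_of_le with 1 1; [lra|]. intros t Ht. rewrite Rminus_0_r.
  rewrite log_kernel_eq, kernel_succ, Rabs_mult, Rabs_mult.
  assert (B := mul_abs_ln_le_1 t ltac:(lra)).
  assert (H1 := pow_le_self (S k) t ltac:(lia) ltac:(lra)). assert (H2 := exp_neg_le_1 t ltac:(lra)).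
  assert (P := kernel_nonneg (S k) t ltac:(lra)).
  assert (kernel (S k) t <= t).
  { unfold kernel. assert (0 <= t ^ S k) by (apply pow_le; lra).
    assert (0 < exp (- t)) by apply exp_pos. nra. }
  rewrite (Rabs_pos_eq t), (Rabs_pos_eq (kernel _ _)) by lra.
  replace (t * kernel (S k) t * Rabs (ln t)) with (kernel (S k) t * (t * Rabs (ln t))) by ring.
  assert (kernel (S k) t * (t * Rabs (ln t)) <= kernel (S k) t * 1) by (apply Rmult_le_compat_l; lra).
  lra.
Qed.

Lemma filterlim_log_kernel_at_oo (k : nat) : filterlim (log_kernel (S k)) at_oo (locally 0).
Proof.
  apply filterlim_at_oo_of_le with (INR (S k) ^ S k + INR (S (S (S k))) ^ S (S (S k))) 0.
  intros t Ht. rewrite Rminus_0_r.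
  assert (H := abs_log_kernel_le k t Ht).
  assert (H1 := pow_mul_exp_neg_le_inv k t Ht). assert (H2 := pow_mul_exp_neg_le_inv (S (S k)) t Ht).
  unfold kernel in H. unfold Rdiv in *. lra.
Qed.

(* Integration by parts against [t ^ (k+2) * ln t * exp (- t)]. *)
Lemma log_moment_succ (k : nat) :
  log_moment (S (S k)) = INR (S (S k)) * log_moment (S k) + INR (fact (S k)).
Proof.
  assert (D : is_RInt_gen (fun t => INR (S (S k)) * log_kernel (S k) t + kernel (S k) t
                                    - log_kernel (S (S k)) t) at_0 at_oo (0 - 0)).
  { apply is_RInt_gen_antiderivative with (log_kernel (S (S k))).
    - intros t Ht. unfold log_kernel, kernel. auto_derive; auto.
      change (match k with 0%nat => 1 | S _ => INR k + 1 end) with (INR (S k)).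
      rewrite (S_INR (S k)). simpl pow. field. lra.
    - intros t Ht. apply ex_derive_continuous_R. unfold log_kernel, kernel. auto_derive. auto.
    - apply filterlim_log_kernel_at_0.
    - apply filterlim_log_kernel_at_oo. }
  unfold log_moment at 1. apply (is_RInt_gen_unique (V := R_CompleteNormedModule)).
  apply is_RInt_gen_lincomb with
    (fun t => INR (S (S k)) * log_kernel (S k) t + kernel (S k) t)
    (fun t => INR (S (S k)) * log_kernel (S k) t + kernel (S k) t - log_kernel (S (S k)) t)
    1 (-1) (INR (S (S k)) * log_moment (S k) + INR (fact (S k))) (0 - 0);
    [|exact D|intros; ring|ring].
  apply is_RInt_gen_lincomb with (log_kernel (S k)) (kernel (S k)) (INR (S (S k))) 1
    (log_moment (S k)) (INR (fact (S k)));
    [apply is_RInt_gen_log_kernel|apply is_RInt_gen_kernel|intros; ring|ring].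
Qed.

(* Integrate the tangent line of [ln] at [k + 2] against [t ^ (k+1) * exp (- t)]. *)
Lemma log_moment_le (k : nat) : log_moment (S k) <= INR (fact (S k)) * ln (INR (S (S k))).
Proof.
  set (a := INR (S (S k))). assert (Ha : 0 < a) by (apply lt_0_INR; lia).
  apply is_RInt_gen_le with (log_kernel (S k))
    (fun t => (ln a - 1) * kernel (S k) t + / a * kernel (S (S k)) t).
  - intros; apply continuous_log_kernel; auto.
  - intros t Ht. apply ex_derive_continuous_R. unfold kernel. auto_derive. auto.
  - intros t Ht. rewrite log_kernel_eq, (kernel_succ (S k)).
    assert (P := kernel_nonneg (S k) t Ht). assert (T := ln_le_tangent a t Ha Ht).
    apply Rle_trans with (kernel (S k) t * (ln a + t / a - 1)); [apply Rmult_le_compat_l; lra|].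
    right. field. lra.
  - apply is_RInt_gen_log_kernel.
  - apply is_RInt_gen_lincomb with (kernel (S k)) (kernel (S (S k))) (ln a - 1) (/ a)
      (INR (fact (S k))) (INR (fact (S (S k)))); try apply is_RInt_gen_kernel; [reflexivity|].
    rewrite (fact_simpl (S k)), mult_INR. fold a. field. lra.
Qed.

(* Integrate the tangent line of [ln] at [k + 1], read as a function of [1 / t]. *)
Lemma log_moment_ge (k : nat) : INR (fact (S k)) * ln (INR (S k)) <= log_moment (S k).
Proof.
  set (a := INR (S k)). assert (Ha : 0 < a) by (apply lt_0_INR; lia).
  apply is_RInt_gen_le with (fun t => (1 + ln a) * kernel (S k) t + (- a) * kernel k t)
    (log_kernel (S k)).
  - intros t Ht. apply ex_derive_continuous_R. unfold kernel. auto_derive. auto.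
  - intros; apply continuous_log_kernel; auto.
  - intros t Ht. rewrite log_kernel_eq, (kernel_succ k).
    assert (P := kernel_nonneg k t Ht). assert (T := ln_ge_tangent a t Ha Ht).
    apply Rle_trans with (t * kernel k t * (ln a + 1 - a / t)); [right; field; lra|].
    apply Rmult_le_compat_l; [apply Rmult_le_pos|]; lra.
  - apply is_RInt_gen_lincomb with (kernel (S k)) (kernel k) (1 + ln a) (- a)
      (INR (fact (S k))) (INR (fact k)); try apply is_RInt_gen_kernel; [reflexivity|].
    rewrite (fact_simpl k), mult_INR. fold a. ring.
  - apply is_RInt_gen_log_kernel.
Qed.

(** * Euler's constant *)

Definition log_mean (k : nat) : R := log_moment k / INR (fact k).

Lemma log_mean_succ (k : nat) : log_mean (S (S k)) = log_mean (S k) + / INR (S (S k)).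
Proof.
  unfold log_mean. rewrite log_moment_succ, (fact_simpl (S k)), mult_INR.
  assert (H1 := INR_fact_lt_0 (S k)). assert (H2 : 0 < INR (S (S k))) by (apply lt_0_INR; lia).
  field. lra.
Qed.

Lemma log_mean_sub_harmonic (k : nat) : log_mean (S k) - harmonic (S k) = log_mean 1 - harmonic 1.
Proof.
  induction k as [|k IH]; [reflexivity|].
  rewrite log_mean_succ. change (harmonic (S (S k))) with (harmonic (S k) + / INR (S (S k))). lra.
Qed.

Lemma log_mean_bounds (k : nat) : ln (INR (S k)) <= log_mean (S k) <= ln (INR (S k) + 1).
Proof.
  assert (H := INR_fact_lt_0 (S k)). unfold log_mean. split.
  - apply Rmult_le_reg_r with (INR (fact (S k))); auto.
    replace (log_moment (S k) / INR (fact (S k)) * INR (fact (S k))) with (log_moment (S k)) by (field; lra).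
    rewrite Rmult_comm. apply log_moment_ge.
  - apply Rmult_le_reg_r with (INR (fact (S k))); auto.
    replace (log_moment (S k) / INR (fact (S k)) * INR (fact (S k))) with (log_moment (S k)) by (field; lra).
    rewrite <- S_INR, Rmult_comm. apply log_moment_le.
Qed.

Lemma is_lim_seq_harmonic_sub_ln :
  is_lim_seq (fun n => harmonic n - ln (INR n)) (harmonic 1 - log_mean 1).
Proof.
  set (c := harmonic 1 - log_mean 1).
  apply is_lim_seq_le_le_loc with (fun _ => c) (fun n => c + / INR n).
  - exists 1%nat. intros [|k] Hk; [lia|].
    assert (B := log_mean_bounds k). assert (E := log_mean_sub_harmonic k).
    assert (D := ln_succ_sub_le_inv (INR (S k)) ltac:(apply lt_0_INR; lia)).
    unfold c. lra.
  - apply is_lim_seq_const.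
  - assert (Hi : is_lim_seq (fun n => / INR n) 0)
      by exact (is_lim_seq_inv INR p_infty is_lim_seq_INR ltac:(discriminate)).
    assert (H := is_lim_seq_plus' _ _ c 0 (is_lim_seq_const c) Hi). rewrite Rplus_0_r in H. exact H.
Qed.

Lemma euler_gamma_eq : euler_gamma = harmonic 1 - log_mean 1.
Proof. unfold euler_gamma. rewrite (is_lim_seq_unique _ _ is_lim_seq_harmonic_sub_ln). reflexivity. Qed.

Lemma log_mean_eq (k : nat) : log_mean (S k) = harmonic (S k) - euler_gamma.
Proof. rewrite euler_gamma_eq. assert (E := log_mean_sub_harmonic k). lra. Qed.

(** * Gamma and digamma at integers *)

Lemma is_derive_of_sub_le (f : R -> R) (x l C : R) :
  (forall h, 0 < Rabs h <= 1 -> Rabs ((f (x + h) - f x) / h - l) <= C * Rabs h) ->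
  is_derive f x l.
Proof.
  intros H. apply is_derive_Reals. intros eps Heps.
  set (C' := Rabs C + 1). assert (HC : 0 < C') by (unfold C'; assert (H0 := Rabs_pos C); lra).
  assert (Hd : 0 < Rmin 1 (eps / C')) by (apply Rmin_pos; [|apply Rdiv_lt_0_compat]; lra).
  exists (mkposreal _ Hd). intros h Hh0 Hh. simpl in Hh.
  assert (H1 := Rmin_l 1 (eps / C')). assert (H2 := Rmin_r 1 (eps / C')).
  assert (Ha : 0 < Rabs h) by (apply Rabs_pos_lt; auto).
  eapply Rle_lt_trans; [apply H; lra|].
  assert (C * Rabs h <= C' * Rabs h) by (apply Rmult_le_compat_r; unfold C'; [lra|];
    assert (H0 := Rle_abs C); lra).
  assert (C' * Rabs h < C' * (eps / C')) by (apply Rmult_lt_compat_l; lra).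
  replace (C' * (eps / C')) with eps in * by (field; lra). lra.
Qed.

Definition Gamma_integrand (x t : R) : R := Rpower t (x - 1) * exp (- t).

Lemma continuous_Gamma_integrand (x t : R) : 0 < t -> continuous (Gamma_integrand x) t.
Proof. intros Ht. apply ex_derive_continuous_R. unfold Gamma_integrand, Rpower. auto_derive. auto. Qed.

Lemma Gamma_integrand_nat_add (j : nat) (h t : R) : 0 < t ->
  Gamma_integrand (INR (S j) + h) t = kernel j t * exp (h * ln t).
Proof.
  intros Ht. unfold Gamma_integrand, kernel, Rpower. rewrite S_INR.
  replace ((INR j + 1 + h - 1) * ln t) with (INR j * ln t + h * ln t) by ring.
  rewrite exp_plus, <- (Rpower_pow j t Ht). unfold Rpower. ring.
Qed.

Lemma abs_Gamma_integrand_le (i : nat) (h t : R) : Rabs h <= 1 -> 0 < t ->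
  Rabs (Gamma_integrand (INR (S (S i)) + h) t) <= kernel i t + kernel (S (S i)) t.
Proof.
  intros Hh Ht. rewrite Gamma_integrand_nat_add by auto.
  replace (kernel i t + kernel (S (S i)) t) with (kernel (S i) t * (/ t + t))
    by (rewrite !kernel_succ; field; lra).
  assert (P := kernel_nonneg (S i) t Ht).
  rewrite Rabs_mult, Rabs_pos_eq, Rabs_pos_eq by (lra || (left; apply exp_pos)).
  apply Rmult_le_compat_l; auto.
  eapply Rle_trans; [|apply exp_abs_ln_le; auto]. apply exp_le_exp.
  eapply Rle_trans; [apply Rle_abs|]. rewrite Rabs_mult.
  assert (H := Rabs_pos (ln t)). assert (H2 := Rabs_pos h). nra.
Qed.

Lemma is_RInt_gen_Gamma_integrand (i : nat) (h : R) : Rabs h <= 1 ->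
  is_RInt_gen (Gamma_integrand (INR (S (S i)) + h)) at_0 at_oo (Gamma (INR (S (S i)) + h)).
Proof.
  intros Hh. apply (RInt_gen_correct (V := R_CompleteNormedModule)).
  apply ex_RInt_gen_dominated with (fun t => kernel i t + kernel (S (S i)) t)
    (INR (fact i) + INR (fact (S (S i)))).
  - intros; apply continuous_Gamma_integrand; auto.
  - intros t Ht. apply ex_derive_continuous_R. unfold kernel. auto_derive. auto.
  - intros; apply abs_Gamma_integrand_le; auto.
  - apply is_RInt_gen_lincomb with (kernel i) (kernel (S (S i))) 1 1 (INR (fact i)) (INR (fact (S (S i))));
      try apply is_RInt_gen_kernel; intros; ring.
Qed.

Lemma Gamma_nat (j : nat) : Gamma (INR (S j)) = INR (fact j).
Proof.
  change (RInt_gen (Gamma_integrand (INR (S j))) at_0 at_oo = INR (fact j)).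
  apply (is_RInt_gen_unique (V := R_CompleteNormedModule)).
  eapply is_RInt_gen_ext; [|apply is_RInt_gen_kernel].
  apply filter_prod_intro with 1 1; [lra|]. intros u v Hu Hv x Hx. simpl in Hx.
  assert (H := Rmin_pos u v ltac:(lra) ltac:(lra)).
  rewrite <- (Rplus_0_r (INR (S j))), Gamma_integrand_nat_add by lra.
  rewrite Rmult_0_l, exp_0, Rmult_1_r. reflexivity.
Qed.

Lemma kernel_mul_ln_sqr_le (i : nat) (t : R) : 0 < t ->
  kernel (S (S i)) t * (ln t ^ 2 * (/ t + t)) <= 8 * kernel i t + 2 * kernel (S (S (S (S (S i))))) t.
Proof.
  intros Ht. rewrite !kernel_succ. assert (P := kernel_nonneg i t Ht). assert (Q := ln_sqr_mul_le t Ht).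
  replace (t * (t * kernel i t) * (ln t ^ 2 * (/ t + t))) with (kernel i t * ((t + t ^ 3) * ln t ^ 2))
    by (field; lra).
  apply Rle_trans with (kernel i t * (8 + 2 * t ^ 5)); [apply Rmult_le_compat_l; lra|].
  right. simpl. ring.
Qed.

(* The difference quotient of the integrand differs from [log_kernel] by
   [kernel (i+2) t * (exp (h ln t) - 1 - h ln t) / h]. *)
Lemma Gamma_integrand_quotient_le (i : nat) (h t : R) : 0 < Rabs h <= 1 -> 0 < t ->
  Rabs ((Gamma_integrand (INR (S (S (S i))) + h) t - Gamma_integrand (INR (S (S (S i)))) t) / h
        - log_kernel (S (S i)) t)
  <= Rabs h * (8 * kernel i t + 2 * kernel (S (S (S (S (S i))))) t).
Proof.
  intros Hh Ht. assert (Hh0 : h <> 0) by (intros ->; rewrite Rabs_R0 in Hh; lra).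
  rewrite <- (Rplus_0_r (INR (S (S (S i))))) at 2.
  rewrite !Gamma_integrand_nat_add, log_kernel_eq, Rmult_0_l, exp_0 by auto.
  set (u := h * ln t). set (p := kernel (S (S i)) t). assert (Pp : 0 <= p) by apply kernel_nonneg, Ht.
  replace ((p * exp u - p * 1) / h - p * ln t) with (p * (exp u - 1 - u) / h) by (unfold u; field; auto).
  unfold Rdiv. rewrite !Rabs_mult, Rabs_pos_eq, Rabs_inv by auto.
  assert (T := exp_sub_1_sub_abs_le u).
  assert (E : exp (Rabs u) <= / t + t).
  { eapply Rle_trans; [|apply exp_abs_ln_le; auto]. apply exp_le_exp.
    unfold u. rewrite Rabs_mult. assert (H := Rabs_pos (ln t)). nra. }
  assert (U : u ^ 2 = Rabs h ^ 2 * ln t ^ 2) by (unfold u; rewrite pow2_abs; ring).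
  assert (B : Rabs (exp u - 1 - u) <= Rabs h ^ 2 * (ln t ^ 2 * (/ t + t))).
  { rewrite U in T. eapply Rle_trans; [exact T|]. rewrite Rmult_assoc.
    apply Rmult_le_compat_l; [apply pow2_ge_0|]. apply Rmult_le_compat_l; [apply pow2_ge_0|exact E]. }
  assert (K := kernel_mul_ln_sqr_le i t Ht).
  apply Rle_trans with (p * (Rabs h ^ 2 * (ln t ^ 2 * (/ t + t))) * / Rabs h).
  { apply Rmult_le_compat_r; [left; apply Rinv_0_lt_compat; lra|]. apply Rmult_le_compat_l; auto. }
  replace (p * (Rabs h ^ 2 * (ln t ^ 2 * (/ t + t))) * / Rabs h)
    with (Rabs h * (p * (ln t ^ 2 * (/ t + t)))) by (field; lra).
  apply Rmult_le_compat_l; [lra|exact K].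
Qed.

Lemma is_derive_Gamma_nat (i : nat) : is_derive Gamma (INR (S (S (S i)))) (log_moment (S (S i))).
Proof.
  set (n := INR (S (S (S i)))).
  apply is_derive_of_sub_le with (8 * INR (fact i) + 2 * INR (fact (S (S (S (S (S i))))))).
  intros h Hh. assert (Hh0 : h <> 0) by (intros ->; rewrite Rabs_R0 in Hh; lra).
  assert (GA := is_RInt_gen_Gamma_integrand (S i) h ltac:(lra)).
  assert (G0 := is_RInt_gen_Gamma_integrand (S i) 0 ltac:(rewrite Rabs_R0; lra)).
  rewrite Rplus_0_r in G0. fold n in GA, G0.
  rewrite Rmult_comm.
  apply abs_is_RInt_gen_le with
    (fun t => (Gamma_integrand (n + h) t - Gamma_integrand n t) / h - log_kernel (S (S i)) t)
    (fun t => Rabs h * (8 * kernel i t + 2 * kernel (S (S (S (S (S i))))) t)).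
  - intros t Ht. apply Gamma_integrand_quotient_le; auto.
  - apply is_RInt_gen_lincomb with
      (fun t => Gamma_integrand (n + h) t - Gamma_integrand n t) (log_kernel (S (S i)))
      (/ h) (-1) (Gamma (n + h) - Gamma n) (log_moment (S (S i))); [| |intros; field; auto|field; auto].
    + apply is_RInt_gen_lincomb with (Gamma_integrand (n + h)) (Gamma_integrand n) 1 (-1)
        (Gamma (n + h)) (Gamma n); auto; intros; ring.
    + apply is_RInt_gen_log_kernel.
  - apply is_RInt_gen_lincomb with (kernel i) (kernel (S (S (S (S (S i))))))
      (Rabs h * 8) (Rabs h * 2) (INR (fact i)) (INR (fact (S (S (S (S (S i)))))));
      try apply is_RInt_gen_kernel; intros; ring.
Qed.

Lemma digamma_nat (i : nat) : digamma (INR (S (S (S i)))) = harmonic (S (S i)) - euler_gamma.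
Proof.
  unfold digamma. rewrite (is_derive_unique _ _ _ (is_derive_Gamma_nat i)), Gamma_nat.
  apply log_mean_eq.
Qed.

(** * The three series *)

Lemma alpha_succ (m : nat) : alpha (S m) = (alpha m + m)%nat.
Proof.
  unfold alpha. replace (S m * S m - S m)%nat with (m * m - m + m * 2)%nat by nia.
  apply Nat.div_add. lia.
Qed.

Lemma beta_eq (m : nat) : beta m = (alpha (S m) - 1)%nat.
Proof. unfold beta, alpha. replace (S m * S m - S m)%nat with (m * m + m)%nat by nia. reflexivity. Qed.

Lemma INR_alpha (m : nat) : 2 * INR (alpha m) = INR m * (INR m - 1).
Proof.
  induction m as [|m IH]; [simpl; ring|].
  rewrite alpha_succ, plus_INR, S_INR. nra.
Qed.

Lemma alpha_ge (n : nat) : (S n <= alpha (n + 2))%nat.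
Proof.
  induction n as [|n IH]; [reflexivity|].
  replace (S n + 2)%nat with (S (n + 2)) by lia. rewrite alpha_succ. lia.
Qed.

Lemma harmonic_nonneg (k : nat) : 0 <= harmonic k.
Proof.
  induction k as [|k IH]; [simpl; lra|].
  change (harmonic (S k)) with (harmonic k + / INR (S k)).
  assert (0 < / INR (S k)) by (apply Rinv_0_lt_compat, lt_0_INR; lia). lra.
Qed.

Lemma sum_n_m_inv (a d : nat) :
  sum_n_m (fun k => / INR k) (S a) (S a + d) = harmonic (S a + d) - harmonic a.
Proof.
  induction d as [|d IH].
  - rewrite Nat.add_0_r, sum_n_n. simpl. ring.
  - replace (S a + S d)%nat with (S (S a + d)) by lia.
    rewrite sum_n_Sm, IH by lia.
    change (harmonic (S (S a + d))) with (harmonic (S a + d) + / INR (S (S a + d))).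
    unfold plus; simpl. ring.
Qed.

Lemma harmonic_le_ln (k : nat) : harmonic k <= ln (INR k + 1) + Rabs euler_gamma.
Proof.
  assert (G := Rle_abs euler_gamma).
  destruct k as [|k]; [simpl; rewrite Rplus_0_l, ln_1; assert (H := Rabs_pos euler_gamma); lra|].
  assert (B := log_mean_bounds k). rewrite log_mean_eq in B. lra.
Qed.

Definition h_alpha (m : nat) : R := harmonic (alpha m - 1).

Lemma INR_add_3 (n : nat) : INR (n + 3) = INR (n + 2) + 1.
Proof. rewrite !plus_INR. simpl. ring. Qed.

Lemma termA_eq (n : nat) : termA n = (h_alpha (n + 3) - h_alpha (n + 2)) / INR (n + 2).
Proof.
  unfold termA, h_alpha; cbv zeta. rewrite beta_eq.
  assert (G := alpha_ge n). set (a := (alpha (n + 2) - 1)%nat).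
  replace (alpha (n + 2)) with (S a) by (unfold a; lia).
  replace (S (n + 2)) with (n + 3)%nat by lia.
  replace (alpha (n + 3) - 1)%nat with (S a + (n + 1))%nat
    by (replace (n + 3)%nat with (S (n + 2)) by lia; rewrite alpha_succ; unfold a; lia).
  rewrite sum_n_m_inv. unfold Rdiv. ring.
Qed.

Lemma termB_eq (n : nat) : termB n = h_alpha (n + 3) / (INR (n + 2) * INR (n + 3)).
Proof.
  unfold termB, h_alpha; cbv zeta. replace (n + 2 + 1)%nat with (n + 3)%nat by lia.
  rewrite INR_add_3. f_equal. ring.
Qed.

Lemma termC_eq (n : nat) :
  termC n = 2 * termB n - euler_gamma * (2 / (INR (n + 2) * INR (n + 3))).
Proof.
  unfold termC; cbv zeta. rewrite termB_eq. unfold h_alpha.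
  assert (G := alpha_ge n).
  assert (E3 : alpha (n + 3) = (alpha (n + 2) + (n + 2))%nat)
    by (replace (n + 3)%nat with (S (n + 2)) by lia; apply alpha_succ).
  set (i := (alpha (n + 3) - 3)%nat).
  assert (Ei : alpha (n + 3) = S (S (S i))) by (unfold i; lia).
  assert (TI := INR_alpha (n + 3)). rewrite Ei in TI |- *.
  rewrite digamma_nat. replace (S (S (S i)) - 1)%nat with (S (S i)) by lia.
  rewrite INR_add_3 in TI |- *. assert (Hn := pos_INR n). rewrite plus_INR in *. simpl in Hn.
  replace (INR (S (S (S i)))) with ((INR n + INR 2) * (INR n + INR 2 + 1) / 2) by lra.
  simpl (INR 2). field. nra.
Qed.

Lemma is_series_telescoping (u : nat -> R) (l : R) :
  is_lim_seq u l -> is_series (fun n => u n - u (S n)) (u O - l).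
Proof.
  intros Hu. unfold is_series. change (is_lim_seq (sum_n (fun n => u n - u (S n))) (u O - l)).
  apply is_lim_seq_ext with (fun n => u O - u (S n)).
  { intros n. induction n as [|n IH]; [rewrite sum_O; reflexivity|].
    rewrite sum_Sn, <- IH. unfold plus; simpl. ring. }
  apply is_lim_seq_minus'; [apply is_lim_seq_const|].
  apply (is_lim_seq_incr_1 u l). exact Hu.
Qed.

Lemma is_lim_seq_inv_INR_add_2 : is_lim_seq (fun n => / INR (n + 2)) 0.
Proof.
  apply (is_lim_seq_inv (fun n => INR (n + 2)) p_infty); [|discriminate].
  apply (is_lim_seq_incr_n INR 2 p_infty), is_lim_seq_INR.
Qed.

Lemma is_lim_seq_ln_div_INR_add_2 : is_lim_seq (fun n => ln (INR (n + 2)) / INR (n + 2)) 0.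
Proof.
  apply (is_lim_comp_seq (fun y => ln y / y) (fun n => INR (n + 2)) p_infty 0).
  - apply is_lim_div_ln_p.
  - exists O. intros; discriminate.
  - apply (is_lim_seq_incr_n INR 2 p_infty), is_lim_seq_INR.
Qed.

Lemma is_series_inv_mul_succ : is_series (fun n => 2 / (INR (n + 2) * INR (n + 3))) 1.
Proof.
  replace 1 with (2 / INR (0 + 2) - 0) by (simpl; field).
  apply is_series_ext with (fun n => 2 / INR (n + 2) - 2 / INR (S n + 2));
    [|apply (is_series_telescoping (fun n => 2 / INR (n + 2)) 0)].
  - intros n. replace (S n + 2)%nat with (n + 3)%nat by lia.
    assert (H : 0 < INR (n + 2)) by (apply lt_0_INR; lia).
    assert (E : 2 / INR (n + 2) - 2 / INR (n + 3) = 2 / (INR (n + 2) * INR (n + 3)))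
      by (rewrite INR_add_3; field; lra).
    exact E.
  - replace (Finite 0) with (Finite (2 * 0)) by (f_equal; ring).
    apply (is_lim_seq_scal_l _ 2 0), is_lim_seq_inv_INR_add_2.
Qed.

Lemma h_alpha_le (n : nat) : h_alpha (n + 2) <= 2 * ln (INR (n + 2)) + Rabs euler_gamma.
Proof.
  unfold h_alpha. eapply Rle_trans; [apply harmonic_le_ln|]. apply Rplus_le_compat_r.
  assert (G := alpha_ge n). assert (TI := INR_alpha (n + 2)).
  assert (H : 0 < INR (n + 2)) by (apply lt_0_INR; lia).
  rewrite <- S_INR. replace (S (alpha (n + 2) - 1)) with (alpha (n + 2)) by lia.
  rewrite <- (Rplus_diag (ln _)), <- ln_mult by lra.
  apply ln_le; [apply lt_0_INR; lia|nra].
Qed.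

(* With [M = n + 2], the [3] absorbs the errors [2 M ln (1 + 1/M) <= 2] and [2 ln (1 + 1/M) <= 1]
   in [termB_le]. *)
Definition termB_majorant (n : nat) : R :=
  (2 * ln (INR (n + 2)) + 3 + Rabs euler_gamma) / INR (n + 2).

Lemma termB_le (n : nat) : termB n <= termB_majorant n - termB_majorant (S n).
Proof.
  rewrite termB_eq. unfold termB_majorant. replace (S n + 2)%nat with (n + 3)%nat by lia.
  assert (B := h_alpha_le (S n)). replace (S n + 2)%nat with (n + 3)%nat in B by lia.
  rewrite !INR_add_3 in *. set (M := INR (n + 2)) in *.
  assert (HM : 2 <= M) by (unfold M; rewrite plus_INR; simpl; assert (H := pos_INR n); lra).
  assert (D := ln_succ_sub_le_inv M ltac:(lra)).
  set (d := ln (M + 1) - ln M) in D.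
  assert (MD : M * d <= 1) by (apply Rmult_le_reg_r with (/ M); [apply Rinv_0_lt_compat; lra|];
    replace (M * d * / M) with d by (field; lra); lra).
  assert (Di : / M <= / 2) by (apply Rinv_le_contravar; lra).
  replace ((2 * ln M + 3 + Rabs euler_gamma) / M - (2 * ln (M + 1) + 3 + Rabs euler_gamma) / (M + 1))
    with ((2 * ln M + 3 + Rabs euler_gamma - 2 * M * d) / (M * (M + 1))) by (unfold d; field; lra).
  unfold Rdiv. apply Rmult_le_compat_r; [left; apply Rinv_0_lt_compat; nra|].
  unfold d in *. lra.
Qed.

Lemma termB_nonneg (n : nat) : 0 <= termB n.
Proof.
  rewrite termB_eq. apply Rmult_le_pos; [apply harmonic_nonneg|].
  left. apply Rinv_0_lt_compat, Rmult_lt_0_compat; apply lt_0_INR; lia.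
Qed.

Lemma is_lim_seq_termB_majorant : is_lim_seq termB_majorant 0.
Proof.
  apply is_lim_seq_ext with
    (fun n => 2 * (ln (INR (n + 2)) / INR (n + 2)) + (3 + Rabs euler_gamma) * / INR (n + 2)).
  { intros n. unfold termB_majorant, Rdiv. ring. }
  replace (Finite 0) with (Finite (2 * 0 + (3 + Rabs euler_gamma) * 0)) by (f_equal; ring).
  apply is_lim_seq_plus'.
  - apply (is_lim_seq_scal_l _ 2 0), is_lim_seq_ln_div_INR_add_2.
  - apply (is_lim_seq_scal_l _ (3 + Rabs euler_gamma) 0), is_lim_seq_inv_INR_add_2.
Qed.

Lemma ex_series_termB : ex_series termB.
Proof.
  apply (ex_series_le (K := R_AbsRing) termB (fun n => termB_majorant n - termB_majorant (S n))).
  - intros n. change (Rabs (termB n) <= termB_majorant n - termB_majorant (S n)).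
    rewrite Rabs_pos_eq by apply termB_nonneg. apply termB_le.
  - eexists. apply is_series_telescoping, is_lim_seq_termB_majorant.
Qed.

(* Abel summation. *)
Lemma sum_n_termA (N : nat) :
  @eq R (sum_n termA N) (sum_n termB N + h_alpha (N + 3) / INR (N + 3)).
Proof.
  induction N as [|N IH].
  - rewrite !sum_O, termA_eq, termB_eq.
    replace (h_alpha (0 + 2)) with 0 by reflexivity. simpl. field.
  - rewrite !sum_Sn. change (plus ?x ?y) with (Rplus x y). rewrite IH, termA_eq, termB_eq.
    replace (S N + 2)%nat with (N + 3)%nat by lia. replace (S N + 3)%nat with (N + 4)%nat by lia.
    replace (INR (N + 4)) with (INR (N + 3) + 1) by (rewrite !plus_INR; simpl; ring).
    assert (H : 0 < INR (N + 3)) by (apply lt_0_INR; lia). field. lra.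
Qed.

Lemma is_lim_seq_h_alpha_div : is_lim_seq (fun N => h_alpha (N + 3) / INR (N + 3)) 0.
Proof.
  apply is_lim_seq_le_le with (fun _ => 0) (fun N => termB_majorant (S N)).
  - intros N. assert (H : 0 < INR (N + 3)) by (apply lt_0_INR; lia). split.
    + apply Rmult_le_pos; [apply harmonic_nonneg|left; apply Rinv_0_lt_compat; lra].
    + assert (B := h_alpha_le (S N)). unfold termB_majorant.
      replace (S N + 2)%nat with (N + 3)%nat in * by lia.
      apply Rmult_le_compat_r; [left; apply Rinv_0_lt_compat; lra|].
      assert (G := Rabs_pos euler_gamma). lra.
  - apply is_lim_seq_const.
  - apply (is_lim_seq_incr_1 termB_majorant 0), is_lim_seq_termB_majorant.
Qed.

Theorem mainTheorem4 :
  ex_series termA /\ ex_series termB /\ ex_series termC /\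
  Series termA = Series termB /\
  Series termB = euler_gamma / 2 + / 2 * Series termC.
Proof.
  assert (HB := Series_correct _ ex_series_termB). set (lB := Series termB) in HB |- *.
  assert (HA : is_series termA lB).
  { change (is_lim_seq (sum_n termA) lB).
    apply is_lim_seq_ext with (fun N => sum_n termB N + h_alpha (N + 3) / INR (N + 3)).
    - intros N. symmetry. apply sum_n_termA.
    - assert (X := is_lim_seq_plus' _ _ _ _ HB is_lim_seq_h_alpha_div).
      rewrite Rplus_0_r in X. exact X. }
  assert (HC : is_series termC (2 * lB - euler_gamma * 1)).
  { apply (is_series_ext _ _ _ (fun n => eq_sym (termC_eq n))).
    apply (is_series_minus _ _ _ _ (is_series_scal (K := R_AbsRing) 2 _ _ HB)
      (is_series_scal (K := R_AbsRing) euler_gamma _ _ is_series_inv_mul_succ)). }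
  rewrite (is_series_unique _ _ HA), (is_series_unique _ _ HC).
  split; [eexists; exact HA|]. split; [eexists; exact HB|]. split; [eexists; exact HC|].
  split; [reflexivity|]. field.
Qed.
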